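(* Let $H$ be an abelian group with an alternating $\mathbb{Z}$-bilinear form $\langle-,-\rangle$, let $z\in\ker\mu$, and let $p\ge 2$. Then the composition of the boundary map $\partial_p:C_p(\mathbb{Q}[H])_{(z)}\to C_{p-1}(\mathbb{Q}[H])_{(z)}$ with the quotient projection $C_{p-1}(\mathbb{Q}[H])_{(z)}\to\hat C_{p-1}(\mathbb{Q}[H])_{(z)}$ is the zero map.
   Context: $\mu:H\to\mathrm{Hom}_{\mathbb{Z}}(H,\mathbb{Z})$, $\mu(x)(y)=\langle x,y\rangle$. $\mathbb{Q}[H]$ is the $\mathbb{Q}$-vector space with basis symbols $[x]$, $x\in H$, with Lie bracket $[[x],[y]]=\langle x,y\rangle[x+y]$. Its Chevalley–Eilenberg chain complex is $C_p(\mathbb{Q}[H])=\bigwedge^p_{\mathbb{Q}}\mathbb{Q}[H]$ with $\partial(x_1\wedge\cdots\wedge x_p)=\sum_{i<j}(-1)^{i+j}[x_i,x_j]\wedge x_1\wedge\cdots\widehat{x_i}\cdots\widehat{x_j}\cdots\wedge x_p$. For $p>0$ and $w\in H$, $C_p(\mathbb{Q}[H])_{(w)}$ is the subspace spanned by $[u_1]\wedge\cdots\wedge[u_p]$ with $u_1+\cdots+u_p=w$; these form subcomplexes. Let $\hat I$ be the (two-sided) ideal of the exterior algebra $\bigwedge\mathbb{Q}[H]$ generated by all elements $[u+v]\wedge[x]-[u]\wedge[x+v]-[v]\wedge[x+u]$ with $u,v,x\in H$. Set $\hat I_{p,(w)}=\hat I\cap C_p(\mathbb{Q}[H])_{(w)}$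 and $\hat C_p(\mathbb{Q}[H])_{(w)}=C_p(\mathbb{Q}[H])_{(w)}/\hat I_{p,(w)}$. *)

From HB Require Import structures.
From mathcomp Require Import all_boot all_order all_algebra.
Set Implicit Arguments. Unset Strict Implicit. Unset Printing Implicit Defensive.
Import Order.TTheory GRing.Theory Num.Theory.
Local Open Scope ring_scope.

(* The tensor algebra T(Q[H]) of the Q-vector space Q[H] with basis symbols [x],
   x in H, has as basis the words (seq H); the word [:: x1; ...; xp] stands for
   [x1] (x) ... (x) [xp].  An element of T is represented by a finite formal
   combination  tel H := seq (rat * seq H); two representatives denote the same
   element iff they have the same coefficient function [coef]. *)
Definition tel (H : eqType) := seq (rat * seq H).

Definition coef (H : eqType) (t : tel H) (w : seq H) : rat :=
  \sum_(cw <- t | cw.2 == w) cw.1.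

Definition tscale (H : eqType) (c : rat) (t : tel H) : tel H :=
  [seq (c * cw.1, cw.2) | cw <- t].

Definition tmul (H : eqType) (s t : tel H) : tel H :=
  [seq (a.1 * b.1, a.2 ++ b.2) | a <- s, b <- t].

Definition mono (H : eqType) (w : seq H) : tel H := [:: (1, w)].

Definition in_ideal (H : eqType) (G : tel H -> Prop) (t : tel H) : Prop :=
  exists l : seq (rat * seq H * tel H * seq H),
    (forall e, e \in l -> G e.1.2) /\
    coef t =1 coef (flatten
      [seq tscale e.1.1.1 (tmul (tmul (mono e.1.1.2) e.1.2) (mono e.2)) | e <- l]).

(* Generators of the ideal J of T with T/J = exterior algebra of Q[H]
   ([x](x)[x] and [x](x)[y] + [y](x)[x]), together with the generators
   [u+v]^[x] - [u]^[x+v] - [v]^[x+u] of \hat I.  The ideal of T they generate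
   is the preimage of \hat I under T -> Lambda Q[H]. *)
Definition hatI_gen (H : zmodType) (g : tel H) : Prop :=
  (exists x : H, g = [:: (1, [:: x; x])]) \/
  (exists x y : H, g = [:: (1, [:: x; y]); (1, [:: y; x])]) \/
  (exists u v x : H,
      g = [:: (1, [:: u + v; x]); (-1, [:: u; x + v]); (-1, [:: v; x + u])]).

Definition in_hatI (H : zmodType) (t : tel H) : Prop := in_ideal (@hatI_gen H) t.

Definition in_Cpw (H : zmodType) (p : nat) (w : H) (t : tel H) : Prop :=
  forall u : seq H, coef t u != 0 -> size u = p /\ \sum_(a <- u) a = w.

Definition drop2 (H : zmodType) (w : seq H) (i j : nat) : seq H :=
  [seq nth 0 w k | k <- iota 0 (size w) & (k != i) && (k != j)].

(* Chevalley--Eilenberg boundary on a basis word (indices 0-based; the sign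
   (-1)^(i+j) is unchanged by the shift from 1-based indexing). *)
Definition bd_word (H : zmodType) (b : H -> H -> int) (w : seq H) : tel H :=
  flatten [seq [seq (((-1) ^+ (i + j) * (b (nth 0 w i) (nth 0 w j))%:~R)%R,
                      (nth 0 w i + nth 0 w j) :: drop2 w i j)
               | j <- iota 0 (size w) & (i < j)%N]
          | i <- iota 0 (size w)].

Definition bd (H : zmodType) (b : H -> H -> int) (t : tel H) : tel H :=
  flatten [seq tscale cw.1 (bd_word b cw.2) | cw <- t].

From HB Require Import structures.
From mathcomp Require Import all_boot all_order all_algebra.
From mathcomp Require Import ring zify.
Import Order.TTheory GRing.Theory Num.Theory.
Local Open Scope ring_scope.
Set Implicit Arguments. Unset Strict Implicit.

(* Write F_ij ([bracket_word]) for the word [w_i + w_j] :: (w without positions i, j), so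
   that d w = sum_(i<j) (-1)^(i+j) b(w_i, w_j) F_ij, and put r_m = (-1)^m F_0m, r_0 = 0
   ([front_term]).
   For 0 < i < j, the relation [w_i + w_j] ^ [w_0] = [w_i] ^ [w_0 + w_j] + [w_j] ^ [w_0 + w_i]
   together with antisymmetry of ^ gives F_ij = (-1)^(i+j) (r_j - r_i) modulo \hat I, hence
   d w = sum_(i<j) b(w_i, w_j) (r_j - r_i) = sum_j b(sum_i w_i, w_j) r_j modulo \hat I,
   using that b is alternating; this vanishes because sum_i w_i = z lies in ker mu. *)

Section TensorIdeal.
Variables (H : eqType) (G : tel H -> Prop).
Implicit Types (s t : tel H) (u w a c : seq H) (k : rat).

Lemma coef_nil w : coef ([::] : tel H) w = 0.
Proof. by rewrite /coef big_nil. Qed.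

Lemma coef_cons k u t w : coef ((k, u) :: t) w = k * (u == w)%:R + coef t w.
Proof. by rewrite /coef big_cons /=; case: (u == w); rewrite ?mulr1 ?mulr0 ?add0r. Qed.

Lemma coef_cat s t w : coef (s ++ t) w = coef s w + coef t w.
Proof. by rewrite /coef big_cat. Qed.

Lemma coef_tscale k t w : coef (tscale k t) w = k * coef t w.
Proof. by rewrite /coef /tscale big_map mulr_sumr. Qed.

Lemma coef_flatten (L : seq (tel H)) w : coef (flatten L) w = \sum_(t <- L) coef t w.
Proof.
elim: L => [|t L IH]; first by rewrite big_nil coef_nil.
by rewrite /= coef_cat big_cons IH.
Qed.

Lemma coef_map (X : Type) (f : X -> rat) (g : X -> seq H) (s : seq X) w :
  coef [seq (f e, g e) | e <- s] w = \sum_(e <- s) f e * (g e == w)%:R.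
Proof.
elim: s => [|e s IH]; first by rewrite big_nil coef_nil.
by rewrite /= coef_cons big_cons IH.
Qed.

(* [bd b] is [tlin (bd_word b)] by definition. *)
Definition tlin (f : seq H -> tel H) t : tel H :=
  flatten [seq tscale cw.1 (f cw.2) | cw <- t].

Lemma coef_tlin f t u :
  coef (tlin f t) u = \sum_(w <- undup (map snd t)) coef t w * coef (f w) u.
Proof.
rewrite /tlin coef_flatten big_map.
rewrite (eq_bigr (fun w => \sum_(cw <- t) if cw.2 == w then cw.1 * coef (f w) u else 0));
  last by move=> w _; rewrite /coef mulr_suml big_mkcond.
rewrite exchange_big /= big_seq [RHS]big_seq; apply: eq_bigr => cw cw_t.
have cw2_t : cw.2 \in undup (map snd t) by rewrite mem_undup map_f.
rewrite coef_tscale (big_rem _ cw2_t) eqxx /= big_seq big1 ?addr0 // => w.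
rewrite (rem_filter _ (undup_uniq _)) mem_filter => /andP [/= /negbTE].
by rewrite eq_sym => ->.
Qed.

Lemma coef_tlin_neq0 f t u :
  coef (tlin f t) u != 0 -> exists2 w, coef t w != 0 & coef (f w) u != 0.
Proof.
rewrite coef_tlin => nz.
have /hasP [w _] : has (fun w => coef t w * coef (f w) u != 0) (undup (map snd t)).
  apply/hasPn => all0; move: nz; rewrite big1_seq ?eqxx // => w /andP [_ /all0].
  by move/negPn/eqP.
by rewrite mulf_eq0 negb_or => /andP [? ?]; exists w.
Qed.

Lemma eq_in_ideal s t : coef s =1 coef t -> in_ideal G t -> in_ideal G s.
Proof. by move=> eq_st [l [Gl eq_t]]; exists l; split=> // w; rewrite eq_st eq_t. Qed.

Lemma in_ideal_nil : in_ideal G [::].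
Proof. by exists [::]. Qed.

Lemma in_ideal_cat s t : in_ideal G s -> in_ideal G t -> in_ideal G (s ++ t).
Proof.
move=> [l1 [G1 eq1]] [l2 [G2 eq2]]; exists (l1 ++ l2); split.
  by move=> e; rewrite mem_cat => /orP [] ?; [apply: G1 | apply: G2].
by move=> w; rewrite map_cat flatten_cat !coef_cat eq1 eq2.
Qed.

Lemma in_ideal_tscale k t : in_ideal G t -> in_ideal G (tscale k t).
Proof.
move=> [l [Gl eq_t]]; exists [seq (k * e.1.1.1, e.1.1.2, e.1.2, e.2) | e <- l].
split; first by move=> _ /mapP [e e_l ->] /=; apply: Gl.
move=> w; rewrite coef_tscale eq_t !coef_flatten !big_map mulr_sumr.
by apply: eq_bigr => e _; rewrite !coef_tscale mulrA.
Qed.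

Lemma in_ideal_flatten (L : seq (tel H)) :
  (forall t, t \in L -> in_ideal G t) -> in_ideal G (flatten L).
Proof.
elim: L => [|t L IH] GL; first exact: in_ideal_nil.
apply: in_ideal_cat; first by apply: GL; rewrite mem_head.
by apply: IH => s s_L; apply: GL; rewrite inE s_L orbT.
Qed.

Lemma in_ideal_tlin f t :
  (forall w, coef t w != 0 -> in_ideal G (f w)) -> in_ideal G (tlin f t).
Proof.
move=> Gf; pose f' w := if coef t w == 0 then [::] else f w.
have Gf't : in_ideal G (tlin f' t).
  apply: in_ideal_flatten => _ /mapP [cw _ ->]; apply: in_ideal_tscale.
  by rewrite /f'; case: eqP => [_ | /eqP /Gf //]; apply: in_ideal_nil.
apply: eq_in_ideal Gf't => u; rewrite !coef_tlin; apply: eq_bigr => w _.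
by rewrite /f'; case: eqP => [-> | _]; rewrite ?mul0r.
Qed.

Lemma in_ideal_gen a g c :
  G g -> in_ideal G [seq (cw.1, a ++ cw.2 ++ c) | cw <- g].
Proof.
move=> Gg; exists [:: (1, a, g, c)]; split; first by move=> e /[!inE] /eqP ->.
move=> w; rewrite /= cats0 coef_tscale mul1r /tmul /mono /= cats0 !coef_map.
rewrite coef_flatten !big_map; apply: eq_bigr => cw _.
by rewrite coef_cons coef_nil addr0 mul1r mulr1 catA.
Qed.

End TensorIdeal.

Section HatIRelations.
Variable H : zmodType.
Implicit Types (a c l : seq H) (x y : H) (k : rat).

Lemma hatI_swap k a x y c :
  in_hatI [:: (k, a ++ x :: y :: c); (k, a ++ y :: x :: c)].
Proof.
have /(in_ideal_tscale k) : in_hatI [:: (1, a ++ x :: y :: c); (1, a ++ y :: x :: c)].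
  apply: (@in_ideal_gen _ _ a [:: (1, [:: x; y]); (1, [:: y; x])]).
  by right; left; exists x, y.
by rewrite /tscale /= mulr1.
Qed.

Lemma hatI_rel a u v x c : in_hatI [:: (1, a ++ (u + v) :: x :: c);
  (-1, a ++ u :: (x + v) :: c); (-1, a ++ v :: (x + u) :: c)].
Proof.
apply: (@in_ideal_gen _ _ a [:: (1, [:: u + v; x]); (-1, [:: u; x + v]); (-1, [:: v; x + u])]).
by right; right; exists u, v, x.
Qed.

Lemma hatI_move l k a x c :
  in_hatI [:: (k, a ++ l ++ x :: c); (- k * (-1) ^+ size l, a ++ x :: l ++ c)].
Proof.
elim: l k a => [|y l IH] k a.
  apply: (eq_in_ideal (t := [::])); last exact: in_ideal_nil.
  by move=> w; rewrite !coef_cons coef_nil /=; ring.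
have := in_ideal_cat (IH k (a ++ [:: y])) (hatI_swap (k * (-1) ^+ size l) a y x (l ++ c)).
apply: eq_in_ideal => w; rewrite !coef_cat !coef_cons coef_nil -!catA /= exprS; ring.
Qed.

End HatIRelations.

Local Open Scope nat_scope.

Lemma count_iota_neq2 (a c k : nat) : a != c ->
  count (fun m => (m != a) && (m != c)) (iota 0 k) = k - (a < k) - (c < k).
Proof.
move=> neq_ac; have count1 d : count (pred1 d) (iota 0 k) = (d < k).
  by rewrite (count_uniq_mem d (iota_uniq 0 k)) mem_iota.
have := count_predC (fun m => (m != a) && (m != c)) (iota 0 k).
have -> : count (predC (fun m => (m != a) && (m != c))) (iota 0 k) =
          count (predU (pred1 a) (pred1 c)) (iota 0 k).
  by apply: eq_count => m /=; rewrite negb_and !negbK.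
have := count_predUI (pred1 a) (pred1 c) (iota 0 k).
have -> : count (predI (pred1 a) (pred1 c)) (iota 0 k) = 0.
  rewrite (@eq_count _ _ pred0) ?count_pred0 // => m /=.
  by apply/negP => /andP [/eqP -> /eqP eq_ac]; rewrite eq_ac eqxx in neq_ac.
rewrite !count1 size_iota; lia.
Qed.

Lemma map_filter_iota_split (T : Type) (f : nat -> T) (P : pred nat) (n k : nat) :
  k < n -> P k -> exists l1 l2,
  [/\ [seq f m | m <- iota 0 n & P m] = l1 ++ f k :: l2,
      l1 ++ l2 = [seq f m | m <- iota 0 n & P m && (m != k)] &
      size l1 = count P (iota 0 k)].
Proof.
move=> lt_kn Pk; have -> : iota 0 n = iota 0 k ++ k :: iota k.+1 (n - k.+1).
  by rewrite -[in LHS](subnKC lt_kn) iotaD -addn1 iotaD -catA add0n.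
exists [seq f m | m <- iota 0 k & P m], [seq f m | m <- iota k.+1 (n - k.+1) & P m].
rewrite !filter_cat !map_cat /= Pk eqxx andbF size_map size_filter; split=> //.
congr (_ ++ _); congr map; apply: eq_in_filter => m; rewrite mem_iota => /andP [lo hi].
  by rewrite (ltn_eqF hi) andbT.
by rewrite (gtn_eqF lo) andbT.
Qed.

Local Open Scope ring_scope.

Section BracketWords.
Variables (H : zmodType) (w : seq H).
Local Notation n := (size w).

Lemma size_drop2 i j : (i < j < n)%N -> size (drop2 w i j) = (n - 2)%N.
Proof.
move=> /andP [lt_ij lt_jn].
rewrite size_map size_filter count_iota_neq2 ?neq_ltn ?lt_ij //.
by rewrite lt_jn (ltn_trans lt_ij lt_jn) -subnDA.
Qed.

Lemma sum_drop2 i j : (i < j < n)%N ->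
  nth 0 w i + nth 0 w j + \sum_(x <- drop2 w i j) x = \sum_(x <- w) x.
Proof.
move=> /andP [lt_ij lt_jn].
have i_n : i \in iota 0 n by rewrite mem_iota (ltn_trans lt_ij).
have j_n : j \in [seq k <- iota 0 n | k != i] by rewrite mem_filter mem_iota lt_jn gtn_eqF.
rewrite [RHS](big_nth 0) /index_iota subn0 (bigD1_seq i i_n (iota_uniq _ _)) /=.
rewrite -[in RHS]big_filter (bigD1_seq j j_n (filter_uniq _ (iota_uniq _ _))) /=.
rewrite big_filter_cond.
by rewrite /drop2 big_map big_filter addrA.
Qed.

Definition drop3 a c k : seq H :=
  [seq nth 0 w m | m <- iota 0 n & [&& m != a, m != c & m != k]].

Lemma drop3_rot a c k : drop3 a c k = drop3 c k a.
Proof.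
rewrite /drop3; congr map; apply: eq_filter => m.
by case: (m != a); case: (m != c); case: (m != k).
Qed.

Lemma drop3_swap a c k : drop3 a c k = drop3 a k c.
Proof.
by rewrite /drop3; congr map; apply: eq_filter => m; case: (m != c); case: (m != k).
Qed.

Lemma drop2_split a c k : (k < n)%N -> k != a -> k != c -> a != c ->
  exists l1 l2, [/\ drop2 w a c = l1 ++ nth 0 w k :: l2,
                    l1 ++ l2 = drop3 a c k & size l1 = (k - (a < k) - (c < k))%N].
Proof.
move=> lt_kn ne_ka ne_kc ne_ac.
have [l1 [l2 [e12 d12 s1]]] := map_filter_iota_split (nth 0 w)
  (P := fun m => (m != a) && (m != c)) lt_kn (introT andP (conj ne_ka ne_kc)).
exists l1, l2; split=> //; last by rewrite s1 count_iota_neq2.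
rewrite d12 /drop3 (eq_filter (a2 := fun m => [&& m != a, m != c & m != k])) //.
by move=> m; rewrite andbA.
Qed.

Definition bracket_word i j : seq H := (nth 0 w i + nth 0 w j) :: drop2 w i j.

Definition front_term m : tel H :=
  if m is 0 then [::] else [:: ((-1) ^+ m, bracket_word 0%N m)].

Definition bracket_relation i j : tel H :=
  (1, bracket_word i j) :: tscale (- (-1) ^+ (i + j)) (front_term j)
                        ++ tscale ((-1) ^+ (i + j)) (front_term i).

Lemma bracket_relation_in_hatI i j : (i < j < n)%N -> in_hatI (bracket_relation i j).
Proof.
case: i => [|i] /andP [lt_ij lt_jn].
  apply: (eq_in_ideal (t := [::])); last exact: in_ideal_nil.
  case: j lt_ij lt_jn => // j _ _ u.
  rewrite coef_cons coef_cat !coef_tscale coef_cons !coef_nil.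
  by rewrite -signr_odd; case: (odd _); rewrite /= ?expr0 ?expr1; ring.
case: j lt_ij lt_jn => [|[|j]] // lt_ij lt_jn.
have lt_in : (i.+1 < n)%N := ltn_trans lt_ij lt_jn.
have ne_ij : i.+1 != j.+2 by rewrite ltn_eqF.
have [l0 [D [e0 d0 /size0nil l0_nil]]] :=
  drop2_split (a := i.+1) (c := j.+2) (k := 0) (ltn_trans (ltn0Sn i) lt_in) isT isT ne_ij.
have [l1 [l2 [e1 d1 s1]]] := drop2_split (a := 0) lt_in isT ne_ij isT.
have [m1 [m2 [e2 d2 s2]]] := drop2_split (a := 0) lt_jn isT (negbT (gtn_eqF lt_ij)) isT.
rewrite {l0}l0_nil /= drop3_rot drop3_rot in e0 d0.
rewrite drop3_swap -d0 in d1; rewrite -d0 in d2.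
rewrite ltn0Sn (leq_gtF (ltnW lt_ij)) subn0 subn1 /= in s1.
rewrite ltn0Sn lt_ij !subn1 /= in s2.
rewrite /bracket_relation /front_term /= /bracket_word e0 e1 e2.
set w0 := nth 0 w 0%N; set wi := nth 0 w i.+1; set wj := nth 0 w j.+2.
have rel := hatI_rel [::] wi wj w0 D.
have swap_i := hatI_swap 1 [::] wi (w0 + wj) D.
have swap_j := hatI_swap 1 [::] wj (w0 + wi) D.
have move_i := hatI_move l1 ((-1) ^+ i) [:: w0 + wj] wi l2.
have move_j := hatI_move m1 ((-1) ^+ j) [:: w0 + wi] wj m2.
rewrite s1 d1 in move_i; rewrite s2 d2 in move_j.
apply: eq_in_ideal (in_ideal_cat rel (in_ideal_cat swap_i (in_ideal_cat swap_j
  (in_ideal_cat move_i move_j)))) => u.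
rewrite !coef_cat !cat0s !cat1s !coef_cons !coef_nil !exprD !exprS.
rewrite -[(-1) ^+ i]signr_odd -[(-1) ^+ j]signr_odd.
by case: (odd i); case: (odd j); rewrite ?expr0 ?expr1; ring.
Qed.

End BracketWords.

Lemma sum_antisym_diff_eq0 (R : numFieldType) (s : seq nat) (beta : nat -> nat -> R)
    (rho : nat -> R) :
  (forall i j, beta i j = - beta j i) -> (forall j, \sum_(i <- s) beta i j = 0) ->
  \sum_(i <- s) \sum_(j <- s | (i < j)%N) beta i j * (rho j - rho i) = 0.
Proof.
move=> anti col0.
pose S i j := if (i < j)%N then beta i j * (rho j - rho i) else 0.
have S_sym i j : S i j + S j i = beta i j * rho j - beta i j * rho i.
  by rewrite /S; case: ltngtP => [_|_|->]; rewrite 1?(anti j i); ring.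
have row0 i : \sum_(j <- s) beta i j = 0.
  by rewrite (eq_bigr (fun j => - beta j i)) => [|j _]; rewrite ?sumrN ?col0 ?oppr0.
have double : (\sum_(i <- s) \sum_(j <- s) S i j) *+ 2 = 0.
  rewrite mulr2n {2}exchange_big -big_split /=.
  under eq_bigr => i _ do rewrite -big_split /= (eq_bigr _ (fun j _ => S_sym i j)) sumrB.
  rewrite sumrB exchange_big /=.
  under eq_bigr => j _ do rewrite -mulr_suml col0 mul0r.
  under [X in _ - X]eq_bigr => i _ do rewrite -mulr_suml row0 mul0r.
  by rewrite !big1 // subrr.
under eq_bigr => i _ do rewrite big_mkcond.
by apply/eqP; move/eqP: double; rewrite mulrn_eq0.
Qed.

Section Boundary.
Variables (H : zmodType) (b : H -> H -> int).

Lemma bd_word_homogeneous (w u : seq H) : coef (bd_word b w) u != 0 ->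
  size u = (size w).-1 /\ \sum_(x <- u) x = \sum_(x <- w) x.
Proof.
move=> nz; have /hasP [cw /flattenP [_ /mapP [i _ ->]]] :
    has (fun cw => cw.2 == u) (bd_word b w).
  by apply/negPn/negP => no_u; move: nz; rewrite /coef big_hasC // eqxx.
move=> /mapP [j]; rewrite mem_filter mem_iota => /andP [lt_ij /andP [_ lt_jn]] -> /eqP <-.
have lt_ijn : (i < j < size w)%N by rewrite lt_ij.
by rewrite /= size_drop2 // big_cons sum_drop2 //; split=> //; lia.
Qed.

Hypothesis b_addl : forall x x' y : H, b (x + x') y = b x y + b x' y.
Hypothesis b_addr : forall x y y' : H, b x (y + y') = b x y + b x y'.
Hypothesis b_alt : forall x : H, b x x = 0.

Lemma b_anti x y : b x y = - b y x.
Proof.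
have := b_alt (x + y); rewrite b_addl !b_addr !b_alt add0r addr0 => /eqP.
by rewrite addr_eq0 => /eqP.
Qed.

Lemma b_suml (I : Type) (r : seq I) (F : I -> H) y :
  b (\sum_(i <- r) F i) y = \sum_(i <- r) b (F i) y.
Proof.
elim: r => [|i r IH]; last by rewrite !big_cons b_addl IH.
by rewrite !big_nil; apply: (addrI (b 0 y)); rewrite -b_addl !addr0.
Qed.

Lemma bd_word_in_hatI (w : seq H) :
  (forall y, b (\sum_(x <- w) x) y = 0) -> in_hatI (bd_word b w).
Proof.
move=> w_ker; set idx := iota 0 (size w).
pose c i j : rat := (-1) ^+ (i + j) * (b (nth 0 w i) (nth 0 w j))%:~R.
have relsI : in_hatI (flatten [seq flatten [seq tscale (c i j) (bracket_relation w i j)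
                        | j <- idx & (i < j)%N] | i <- idx]).
  apply: in_ideal_flatten => t /mapP [i _ ->]; apply: in_ideal_flatten => t' /mapP [j].
  rewrite mem_filter mem_iota => /andP [lt_ij /andP [_ lt_jn]] ->.
  by apply/in_ideal_tscale/bracket_relation_in_hatI; rewrite lt_ij.
apply: eq_in_ideal relsI => u; set rho := fun m => coef (front_term w m) u.
have summand i j : c i j * (bracket_word w i j == u)%:R -
    coef (tscale (c i j) (bracket_relation w i j)) u =
    (b (nth 0 w i) (nth 0 w j))%:~R * (rho j - rho i).
  rewrite /c coef_tscale /bracket_relation coef_cons coef_cat !coef_tscale -signr_odd.
  by case: (odd _); rewrite /rho ?expr0 ?expr1; ring.
apply/eqP; rewrite -subr_eq0; apply/eqP.
rewrite /bd_word !coef_flatten !big_map -sumrB.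
rewrite (eq_bigr (fun i => \sum_(j <- idx | (i < j)%N)
    (b (nth 0 w i) (nth 0 w j))%:~R * (rho j - rho i))) => [|i _]; last first.
  rewrite coef_flatten big_map coef_map !big_filter -sumrB.
  by apply: eq_bigr => j _; apply: summand.
apply: sum_antisym_diff_eq0 => [i j | j]; first by rewrite b_anti intrN.
rewrite -(big_morph _ (@intrD _) (mulr0z 1)) -b_suml.
suff -> : \sum_(i <- idx) nth 0 w i = \sum_(x <- w) x by rewrite w_ker.
by rewrite [RHS](big_nth 0) /index_iota subn0.
Qed.

End Boundary.

Unset Implicit Arguments.
Set Strict Implicit.

Theorem proposition3p1 (H : zmodType) (b : H -> H -> int)
  (b_addl : forall x x' y : H, b (x + x') y = b x y + b x' y)
  (b_addr : forall x y y' : H, b x (y + y') = b x y + b x y')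
  (b_alt : forall x : H, b x x = 0)
  (z : H) (hz : forall y : H, b z y = 0)
  (p : nat) (hp : (2 <= p)%N)
  (t : tel H) (ht : in_Cpw p z t) :
  in_hatI (bd b t) /\ in_Cpw p.-1 z (bd b t).
Proof.
split.
  apply: in_ideal_tlin => w /ht [_ sum_w].
  by apply: bd_word_in_hatI => // y; rewrite sum_w.
move=> u /coef_tlin_neq0 [w /ht [size_w sum_w] /bd_word_homogeneous].
by rewrite size_w sum_w.
Qed.
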